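(* Fix linearly independent $f,g,h\in S_1\oplus S_2$. Then $\dim\big(\pi_{1,2}P_\xi(S_3)+[f,g,h]\big)=5$ for almost every $\xi\in\mathbb{R}^2$.
   Context: For $j\ge0$, $S_j$ is the real vector space of homogeneous polynomials of degree $j$ in $r,s$; $[\cdot]$ denotes linear span. For $\xi=(a,b)\in\mathbb{R}^2$ and a polynomial $f$, $P_\xi f(r,s)=f(\xi)+\partial_rf(\xi)(r-a)+\partial_sf(\xi)(s-b)+\frac12\partial_{rr}f(\xi)(r-a)^2+\partial_{rs}f(\xi)(r-a)(s-b)+\frac12\partial_{ss}f(\xi)(s-b)^2$ (second-order Taylor polynomial at $\xi$), an element of $S_0\oplus S_1\oplus S_2$. $\pi_{1,2}$ is the projection of $S_0\oplus S_1\oplus S_2$ onto $S_1\oplus S_2$ along $S_0$. *)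

From HB Require Import structures.
From mathcomp Require Import all_boot all_order all_algebra.
From mathcomp Require Import all_classical all_reals all_analysis.
Set Implicit Arguments. Unset Strict Implicit. Unset Printing Implicit Defensive.
Import Order.TTheory GRing.Theory Num.Theory.
Local Open Scope ring_scope.

(* Real bivariate polynomials in r, s are represented as {poly {poly R}}:
   the outer variable is r, the inner variable (in the coefficients) is s.
   The coefficient of r^i s^k in p is (p`_i)`_k. *)
Definition bipoly (R : realType) := {poly {poly R}}.

Definition var_r {R : realType} : bipoly R := 'X.
Definition var_s {R : realType} : bipoly R := ('X : {poly R})%:P.
Definition cst {R : realType} (c : R) : bipoly R := c%:P%:P.

Definition bicoef {R : realType} (p : bipoly R) (i k : nat) : R := (p`_i)`_k.

Definition in_S {R : realType} (j : nat) (p : bipoly R) : Prop :=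
  forall i k, (i + k != j)%N -> bicoef p i k = 0.

Definition in_S12 {R : realType} (p : bipoly R) : Prop :=
  forall i k, (i + k != 1)%N -> (i + k != 2)%N -> bicoef p i k = 0.

Definition dr {R : realType} (p : bipoly R) : bipoly R := p^`().
Definition ds {R : realType} (p : bipoly R) : bipoly R :=
  map_poly (fun q : {poly R} => q^`()) p.
Definition ev {R : realType} (p : bipoly R) (xi : R * R) : R :=
  (p.[xi.1%:P]).[xi.2].

Definition taylor2 {R : realType} (xi : R * R) (f : bipoly R) : bipoly R :=
  let a := xi.1 in let b := xi.2 in
  let u := var_r - cst a in let v := var_s - cst b in
  cst (ev f xi)
  + cst (ev (dr f) xi) * u + cst (ev (ds f) xi) * v
  + cst (ev (dr (dr f)) xi / 2) * u ^+ 2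
  + cst (ev (dr (ds f)) xi) * (u * v)
  + cst (ev (ds (ds f)) xi / 2) * v ^+ 2.

(* projection pi_{1,2} onto S_1 (+) S_2 along S_0 (applied to elements of
   S_0 (+) S_1 (+) S_2): remove the constant term *)
Definition pi12 {R : realType} (p : bipoly R) : bipoly R := p - cst (bicoef p 0 0).

(* coordinates of an element of S_1 (+) S_2 in the basis r, s, r^2, rs, s^2 *)
Definition coord12 {R : realType} (p : bipoly R) : 'rV[R]_5 :=
  \row_(j < 5) bicoef p (nth 0%N [:: 1; 0; 2; 1; 0]%N j)
                        (nth 0%N [:: 0; 1; 0; 1; 2]%N j).

Definition S3basis {R : realType} (i : 'I_4) : bipoly R :=
  var_r ^+ (3 - i) * var_s ^+ i.

(* dim (pi_{1,2} P_xi (S_3) + [f, g, h]) computed as the rank of the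
   coordinate matrix of a spanning family of this subspace of S_1 (+) S_2 *)
Definition dim_sum {R : realType} (xi : R * R) (f g h : bipoly R) : nat :=
  \rank (col_mx (\matrix_(i < 4) coord12 (pi12 (taylor2 xi (S3basis i))))
                (\matrix_(i < 3) coord12 (nth 0 [:: f; g; h] i))).

Definition lin_indep3 {R : realType} (f g h : bipoly R) : Prop :=
  forall a b c : R, cst a * f + cst b * g + cst c * h = 0 -> [/\ a = 0, b = 0 & c = 0].

From Pilot Require Import Defs.
From HB Require Import structures.
From mathcomp Require Import all_boot all_order all_algebra.
From mathcomp Require Import all_classical all_reals all_analysis.
From mathcomp Require Import measurable_realfun ring.
From mathcomp Require polyrcf.

(* For xi = (a, b) with a b != 0, the images of r^3, r^2 s and s^3 under
   pi_{1,2} P_xi already span a 3-dimensional space, whose annihilator consists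
   of the linear forms p |-> y . (grad p)(xi / 2) on S_1 (+) S_2, y in R^2.  So
   the sum is all of S_1 (+) S_2 as soon as two of the gradients of f, g, h at
   xi / 2 are independent, i.e. one of their Jacobian determinants is nonzero
   there.  If the three Jacobians vanished identically, the linear parts of
   f, g, h would be pairwise proportional, and so would their quadratic parts;
   then f, g, h would span at most a plane.  Hence the exceptional set lies in
   the zero set of a nonzero polynomial in xi, and that zero set is null since
   almost all of its vertical sections are finite. *)

Set Implicit Arguments.
Unset Strict Implicit.
Unset Printing Implicit Defensive.
Import Order.TTheory GRing.Theory Num.Theory.
Local Open Scope ring_scope.
Local Open Scope classical_set_scope.

Section LinearAlgebra.
Variable K : fieldType.

Lemma det2_ker0 (u1 u2 v1 v2 y z : K) : u1 * v2 - u2 * v1 != 0 ->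
  u1 * y + u2 * z = 0 -> v1 * y + v2 * z = 0 -> y = 0 /\ z = 0.
Proof.
move=> det_neq0 Eu Ev; split; apply: (mulIf det_neq0); rewrite mul0r.
- transitivity (v2 * (u1 * y + u2 * z) - u2 * (v1 * y + v2 * z)); first ring.
  by rewrite Eu Ev !mulr0 subrr.
- transitivity (u1 * (v1 * y + v2 * z) - v1 * (u1 * y + u2 * z)); first ring.
  by rewrite Eu Ev !mulr0 subrr.
Qed.

Lemma row_full_ker0 m n (A : 'M[K]_(m, n)) :
  (forall v : 'cV_n, A *m v = 0 -> v = 0) -> row_full A.
Proof.
move=> ker0; rewrite /row_full -mxrank_tr -[_ == n]/(row_free A^T) -kermx_eq0.
apply/eqP/row_matrixP => i; rewrite row0; apply: trmx_inj; rewrite trmx0.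
by apply: ker0; rewrite -{1}[A]trmxK -trmx_mul -row_mul mulmx_ker row0 trmx0.
Qed.

Section Minors.
Implicit Types (F G H : nat -> K) (i j k n : nat).

Definition minor2 F G i j := F i * G j - F j * G i.
Definition minor3 F G H i j k :=
  F i * minor2 G H j k - F j * minor2 G H i k + F k * minor2 G H i j.

Definition indep3_on n F G H := forall al be ga : K,
  (forall j, (j < n)%N -> al * F j + be * G j + ga * H j = 0) -> [/\ al = 0, be = 0 & ga = 0].

Lemma minor2C F G i j : minor2 F G j i = - minor2 F G i j.
Proof. by rewrite /minor2; ring. Qed.

Lemma minor2nn F G i : minor2 F G i i = 0.
Proof. by rewrite /minor2 mulrC subrr. Qed.

Lemma minor3_cycle F G H i j k : minor3 F G H i j k = minor3 F G H j k i.
Proof. by rewrite /minor3 /minor2; ring. Qed.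

Lemma minor3_expand_last F G H i j k : minor3 F G H i j k =
  H k * minor2 F G i j - G k * minor2 F H i j + F k * minor2 G H i j.
Proof. by rewrite /minor3 /minor2; ring. Qed.

Lemma minor3_eq0 F G H i j k :
  minor2 F G i j = 0 -> minor2 F H i j = 0 -> minor2 G H i j = 0 -> minor3 F G H i j k = 0.
Proof. by rewrite minor3_expand_last => -> -> ->; rewrite !mulr0 subrr add0r. Qed.

Lemma minor3_eq0_blocks n (P : pred nat) F G H :
    (forall i j, (i < n)%N -> (j < n)%N -> P i = P j ->
       [/\ minor2 F G i j = 0, minor2 F H i j = 0 & minor2 G H i j = 0]) ->
  forall i j k, (i < n)%N -> (j < n)%N -> (k < n)%N -> minor3 F G H i j k = 0.
Proof.
move=> blocks i j k lt_i lt_j lt_k.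
have [Pij|Pij] := eqVneq (P i) (P j).
  by have [] := blocks i j lt_i lt_j Pij; apply: minor3_eq0.
have [Pjk|Pjk] := eqVneq (P j) (P k).
  by rewrite minor3_cycle; have [] := blocks j k lt_j lt_k Pjk; apply: minor3_eq0.
have Pki : P k = P i by move: Pij Pjk; case: (P i); case: (P j); case: (P k).
by rewrite 2!minor3_cycle; have [] := blocks k i lt_k lt_i Pki; apply: minor3_eq0.
Qed.

Lemma minor3_eq0_dependent n F G H :
    (forall i j k, (i < n)%N -> (j < n)%N -> (k < n)%N -> minor3 F G H i j k = 0) ->
  ~ indep3_on n F G H.
Proof.
move=> minor3_0 indep.
have [[i0 [lt_i0 Fi0]]|F_eq0] := pselect (exists i, (i < n)%N /\ F i != 0); last first.
  have [] := indep 1 0 0 => [j lt_j|]; last by move=> /eqP; rewrite oner_eq0.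
  have /eqP -> : F j == 0 by apply/negPn/negP => Fj; apply: F_eq0; exists j.
  by rewrite mulr0 !mul0r !addr0.
have [[i [j [lt_i lt_j mij]]]|minor2_eq0] :=
  pselect (exists i j, [/\ (i < n)%N, (j < n)%N & minor2 F G i j != 0]); last first.
  have [] := indep (G i0) (- F i0) 0 => [j lt_j|_ /eqP]; last by rewrite oppr_eq0 (negbTE Fi0).
  have /eqP m : minor2 F G i0 j == 0.
    by apply/negPn/negP => ne; apply: minor2_eq0; exists i0, j.
  by rewrite mul0r addr0 -[RHS]oppr0 -m /minor2; ring.
have [] := indep (minor2 G H i j) (- minor2 F H i j) (minor2 F G i j) => [k lt_k|_ _ /eqP].
  by rewrite -(minor3_0 i j k) // minor3_expand_last; ring.
by rewrite (negbTE mij).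
Qed.

End Minors.

End LinearAlgebra.

Section ProductNull.
Local Open Scope ereal_scope.
Context d1 d2 (T1 : measurableType d1) (T2 : measurableType d2) (R : realType).
Context (m1 : {measure set T1 -> \bar R}) (m2 : {sigma_finite_measure set T2 -> \bar R}).

Lemma product_measure1_xsection_null (A : set (T1 * T2)) (N : set T1) :
  measurable A -> measurable N -> m1 N = 0 ->
  (forall x, ~ N x -> m2 (xsection A x) = 0) -> (m1 \x m2) A = 0.
Proof.
move=> mA mN m1N0 sectionN0.
rewrite /product_measure1 (ge0_negligible_integral mN measurableT) //.
- by apply: integral0_eq => x [_ Nx]; exact: sectionN0.
- exact: measurable_fun_xsection.
Qed.

End ProductNull.

Section Bipoly.
Variable R : realType.
Implicit Types (p q f g h : bipoly R) (c : R) (xi : R * R).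

Definition monomial (m n : nat) : bipoly R := var_r ^+ m * var_s ^+ n.

Lemma bipolyP p q : (forall i k, bicoef p i k = bicoef q i k) -> p = q.
Proof. by move=> eq_pq; apply/polyP => i; apply/polyP => k; apply: eq_pq. Qed.

Lemma bicoef0 i k : bicoef (0 : bipoly R) i k = 0.
Proof. by rewrite /bicoef !coef0. Qed.

Lemma bicoefD p q i k : bicoef (p + q) i k = bicoef p i k + bicoef q i k.
Proof. by rewrite /bicoef !coefD. Qed.

Lemma bicoefB p q i k : bicoef (p - q) i k = bicoef p i k - bicoef q i k.
Proof. by rewrite /bicoef !coefB. Qed.

Lemma bicoef_cstM c p i k : bicoef (Defs.cst c * p) i k = c * bicoef p i k.
Proof. by rewrite /bicoef /Defs.cst !coefCM. Qed.

Lemma bicoef_cst c i k : bicoef (Defs.cst c) i k = if (i == 0%N) && (k == 0%N) then c else 0.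
Proof. by rewrite /bicoef /Defs.cst coefC; case: (i == 0%N); rewrite ?coef0 ?coefC. Qed.

Lemma bicoef_monomial m n i k :
  bicoef (monomial m n) i k = if (i == m) && (k == n) then 1 else 0.
Proof.
rewrite /bicoef /monomial /var_s -rmorphXn coefMC coefXn.
by case: (i == m); rewrite ?mul1r ?mul0r ?coefXn ?coef0 //=; case: (k == n).
Qed.

Lemma bicoef_dr p i k : bicoef (dr p) i k = bicoef p i.+1 k *+ i.+1.
Proof. by rewrite /bicoef /dr coef_deriv coefMn. Qed.

Lemma bicoef_ds p i k : bicoef (ds p) i k = bicoef p i k.+1 *+ k.+1.
Proof. by rewrite /bicoef /ds coef_map_id0 ?deriv0 // coef_deriv. Qed.

Lemma dr_monomial c m n :
  dr (Defs.cst c * monomial m n) = Defs.cst (c * m%:R) * monomial m.-1 n.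
Proof.
apply: bipolyP => i k; rewrite bicoef_dr !bicoef_cstM !bicoef_monomial.
case: m => [|m]; first by rewrite mulr0 mul0r mul0rn.
by rewrite eqSS; case: (i =P m) => [->|]; case: (k == n);
  rewrite ?mulr0 ?mul0rn ?mulr1 ?mulr_natr.
Qed.

Lemma ds_monomial c m n :
  ds (Defs.cst c * monomial m n) = Defs.cst (c * n%:R) * monomial m n.-1.
Proof.
apply: bipolyP => i k; rewrite bicoef_ds !bicoef_cstM !bicoef_monomial.
case: n => [|n]; first by rewrite andbF mulr0 mul0r mul0rn.
by rewrite eqSS; case: (k =P n) => [->|]; case: (i == m);
  rewrite ?mulr0 ?mul0rn ?mulr1 ?mulr_natr.
Qed.

Lemma ev_cst_monomial c m n xi :
  ev (Defs.cst c * monomial m n) xi = c * xi.1 ^+ m * xi.2 ^+ n.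
Proof. by rewrite /ev /monomial /Defs.cst /var_r /var_s !hornerE. Qed.

Definition coef12 p (j : nat) : R :=
  bicoef p (nth 0 [:: 1; 0; 2; 1; 0] j) (nth 0 [:: 0; 1; 0; 1; 2] j).
Arguments coef12 p j%_N.

Lemma coord12E p j : coord12 p 0 j = coef12 p j.
Proof. by rewrite mxE. Qed.

Lemma coef12_pi12 p j : (j < 5)%N -> coef12 (pi12 p) j = coef12 p j.
Proof.
by rewrite /coef12 /pi12 bicoefB bicoef_cst; case: j => [|[|[|[|[|]]]]] //= _; rewrite subr0.
Qed.

Lemma taylor2E a b q :
  let xi := (a, b) in
  let d1 := ev (dr q) xi in let d2 := ev (ds q) xi in
  let e11 := ev (dr (dr q)) xi / 2 in let d12 := ev (dr (ds q)) xi in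
  let e22 := ev (ds (ds q)) xi / 2 in
  taylor2 xi q =
      Defs.cst (ev q xi - d1 * a - d2 * b + e11 * a ^+ 2 + d12 * a * b + e22 * b ^+ 2)
        * monomial 0 0
    + Defs.cst (d1 - 2 * e11 * a - d12 * b) * monomial 1 0
    + Defs.cst (d2 - d12 * a - 2 * e22 * b) * monomial 0 1
    + Defs.cst e11 * monomial 2 0 + Defs.cst d12 * monomial 1 1
    + Defs.cst e22 * monomial 0 2.
Proof. by rewrite /taylor2 /monomial /Defs.cst /=; ring. Qed.

Lemma coef12_taylor2 a b q j : (j < 5)%N ->
  coef12 (pi12 (taylor2 (a, b) q)) j =
  [:: ev (dr q) (a, b) - ev (dr (dr q)) (a, b) * a - ev (dr (ds q)) (a, b) * b;
      ev (ds q) (a, b) - ev (dr (ds q)) (a, b) * a - ev (ds (ds q)) (a, b) * b;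
      ev (dr (dr q)) (a, b) / 2; ev (dr (ds q)) (a, b); ev (ds (ds q)) (a, b) / 2]`_j.
Proof.
move=> lt_j5; rewrite coef12_pi12 // taylor2E /coef12.
rewrite !(bicoefD, bicoef_cstM, bicoef_monomial).
by case: j lt_j5 => [|[|[|[|[|]]]]] //= _; field.
Qed.

Definition taylor_row (a b : R) (i : nat) : seq R :=
  match i with
  | 0 => [:: - (3 * a ^+ 2); 0; 3 * a; 0; 0]
  | 1 => [:: - (2 * a * b); - a ^+ 2; b; 2 * a; 0]
  | 2 => [:: - b ^+ 2; - (2 * a * b); 0; 2 * b; a]
  | _ => [:: 0; - (3 * b ^+ 2); 0; 0; 3 * b]
  end.

Lemma coef12_taylor2_S3basis xi (i : 'I_4) j : (j < 5)%N ->
  coef12 (pi12 (taylor2 xi (S3basis i))) j = (taylor_row xi.1 xi.2 i)`_j.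
Proof.
have -> : S3basis i = Defs.cst 1 * monomial (3 - i) i by rewrite mul1r.
move=> lt_j5; case: xi => a b; rewrite coef12_taylor2 //.
rewrite !(dr_monomial, ds_monomial, ev_cst_monomial) /=.
by case: i => [[|[|[|[|]]]] //= _]; case: j lt_j5 => [|[|[|[|[|]]]]] //= _;
  rewrite ?(subSS, subn0); field.
Qed.

Definition affine_bipoly (c0 c1 c2 : R) : bipoly R :=
  Defs.cst c0 + Defs.cst c1 * var_r + Defs.cst c2 * var_s.

Lemma ev_affine_bipoly c0 c1 c2 a b :
  ev (affine_bipoly c0 c1 c2) (a, b) = c0 + c1 * a + c2 * b.
Proof. by rewrite /ev /affine_bipoly /Defs.cst /var_r /var_s !hornerE. Qed.

(* For p in S_1 (+) S_2, grad_r p and grad_s p are the components of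
   xi |-> 2 (grad p)(xi / 2). *)
Definition grad_r p := affine_bipoly (2 * coef12 p 0) (2 * coef12 p 2) (coef12 p 3).
Definition grad_s p := affine_bipoly (2 * coef12 p 1) (coef12 p 3) (2 * coef12 p 4).
Definition jacdet p q : bipoly R := grad_r p * grad_s q - grad_s p * grad_r q.

Lemma ev_jacdet p q xi : ev (jacdet p q) xi =
  ev (grad_r p) xi * ev (grad_s q) xi - ev (grad_s p) xi * ev (grad_r q) xi.
Proof. by rewrite /ev /jacdet !(hornerD, hornerN, hornerM). Qed.

Lemma taylor_row_ker (a b : R) (x : nat -> R) : a != 0 -> b != 0 ->
    (forall i, (i < 4)%N -> \sum_(j < 5) (taylor_row a b i)`_j * x j = 0) ->
  [/\ x 2%N = a * x 0%N, x 3%N = (b * x 0%N + a * x 1%N) / 2 & x 4%N = b * x 1%N].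
Proof.
move=> a0 b0 ker; have := ker 3%N isT; have := ker 1%N isT; have := ker 0%N isT.
rewrite !big_ord_recr !big_ord0 /= !add0r => E0 E1 E3.
have n2 : (2 : R) != 0 by rewrite pnatr_eq0.
have n3 : (3 : R) != 0 by rewrite pnatr_eq0.
have e2 : x 2%N = a * x 0%N.
  apply: (mulfI (mulf_neq0 n3 a0)); apply/eqP; rewrite -subr_eq0; apply/eqP.
  by rewrite -E0; ring.
have e4 : x 4%N = b * x 1%N.
  apply: (mulfI (mulf_neq0 n3 b0)); apply/eqP; rewrite -subr_eq0; apply/eqP.
  by rewrite -E3; ring.
split=> //; apply: (mulfI (mulf_neq0 n2 a0)).
apply/eqP; rewrite -subr_eq0; apply/eqP.
by rewrite -E1 e2; field.
Qed.

Lemma coef12_dot_ker p (a b : R) (x : nat -> R) :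
    x 2%N = a * x 0%N -> x 3%N = (b * x 0%N + a * x 1%N) / 2 -> x 4%N = b * x 1%N ->
  2 * \sum_(j < 5) coef12 p j * x j =
    ev (grad_r p) (a, b) * x 0%N + ev (grad_s p) (a, b) * x 1%N.
Proof.
move=> e2 e3 e4; rewrite !ev_affine_bipoly !big_ord_recr big_ord0 /= add0r e2 e3 e4.
by field.
Qed.

Lemma taylor_ker_trivial xi f g h (x : nat -> R) : xi.1 != 0 -> xi.2 != 0 ->
    [\/ ev (jacdet f g) xi != 0, ev (jacdet f h) xi != 0 | ev (jacdet g h) xi != 0] ->
    (forall i, (i < 4)%N -> \sum_(j < 5) (taylor_row xi.1 xi.2 i)`_j * x j = 0) ->
    (forall i, (i < 3)%N -> \sum_(j < 5) coef12 (nth 0 [:: f; g; h] i) j * x j = 0) ->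
  forall j, (j < 5)%N -> x j = 0.
Proof.
case: xi => a b /= a0 b0 jac_neq0 /(taylor_row_ker a0 b0) [e2 e3 e4] ker_fgh.
have grad_ker i : (i < 3)%N -> ev (grad_r (nth 0 [:: f; g; h] i)) (a, b) * x 0%N
    + ev (grad_s (nth 0 [:: f; g; h] i)) (a, b) * x 1%N = 0.
  by move=> lt_i3; rewrite -(coef12_dot_ker _ e2 e3 e4) ker_fgh // mulr0.
have /= := grad_ker 0%N isT; have /= := grad_ker 1%N isT; have /= := grad_ker 2%N isT.
move=> Eh Eg Ef; have [x0 x1] : x 0%N = 0 /\ x 1%N = 0.
  by case: jac_neq0; rewrite ev_jacdet => /det2_ker0; apply.
by case=> [|[|[|[|[|]]]]] //= _; rewrite ?e2 ?e3 ?e4 ?x0 ?x1 ?mulr0 ?addr0 ?mul0r.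
Qed.

Lemma dim_sum_eq5 xi f g h : xi.1 != 0 -> xi.2 != 0 ->
    [\/ ev (jacdet f g) xi != 0, ev (jacdet f h) xi != 0 | ev (jacdet g h) xi != 0] ->
  dim_sum xi f g h = 5%N.
Proof.
move=> a0 b0 jac_neq0; apply/eqP/row_full_ker0 => v.
rewrite mul_col_mx => /eqP; rewrite col_mx_eq0 => /andP[/eqP kerT /eqP kerC].
pose x j := v (inord j) 0.
have row_ker m (A : 'M[R]_(m, 5)) (i : 'I_m) : A *m v = 0 -> \sum_(j < 5) A i j * x j = 0.
  move/matrixP/(_ i 0); rewrite !mxE => E; rewrite -[RHS]E.
  by apply: eq_bigr => j _; rewrite /x inord_val.
apply/colP => j; rewrite mxE -[j]inord_val -/(x j).
apply: (taylor_ker_trivial (x := x) a0 b0 jac_neq0) => //.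
- move=> i lt_i4; rewrite -[RHS](row_ker _ _ (Ordinal lt_i4) kerT).
  by apply: eq_bigr => k _; rewrite mxE coord12E coef12_taylor2_S3basis.
- move=> i lt_i3; rewrite -[RHS](row_ker _ _ (Ordinal lt_i3) kerC).
  by apply: eq_bigr => k _; rewrite mxE coord12E.
Qed.

Lemma indep3_coef12 f g h : in_S12 f -> in_S12 g -> in_S12 h -> lin_indep3 f g h ->
  indep3_on 5 (coef12 f) (coef12 g) (coef12 h).
Proof.
move=> Sf Sg Sh indep al be ga comb0; apply: indep; apply: bipolyP => i k.
rewrite bicoef0 !bicoefD !bicoef_cstM.
have [deg12|] := boolP ((i + k == 1)%N || (i + k == 2)%N); last first.
  by rewrite negb_or => /andP[ne1 ne2]; rewrite Sf // Sg // Sh // !mulr0 !addr0.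
case: i deg12 => [|[|[|i]]]; case: k => [|[|[|k]]] //= _.
- exact: (comb0 1%N).
- exact: (comb0 4%N).
- exact: (comb0 0%N).
- exact: (comb0 3%N).
- exact: (comb0 2%N).
Qed.

Lemma jacdet_eq0_minor2 p q : (forall xi, ev (jacdet p q) xi = 0) ->
  forall i j, (i < 5)%N -> (j < 5)%N -> (i < 2)%N = (j < 2)%N ->
  minor2 (coef12 p) (coef12 q) i j = 0.
Proof.
set m := minor2 (coef12 p) (coef12 q) => jac0.
pose J a b := ev (jacdet p q) (a, b).
have J0 a b : J a b = 0 := jac0 (a, b).
have JE a b : J a b =
    (2 * coef12 p 0 + 2 * coef12 p 2 * a + coef12 p 3 * b)
      * (2 * coef12 q 1 + coef12 q 3 * a + 2 * coef12 q 4 * b)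
  - (2 * coef12 p 1 + coef12 p 3 * a + 2 * coef12 p 4 * b)
      * (2 * coef12 q 0 + 2 * coef12 q 2 * a + coef12 q 3 * b).
  by rewrite /J ev_jacdet !ev_affine_bipoly.
have n4 : (4 : R) != 0 by rewrite pnatr_eq0.
have m01 : m 0 1 = 0.
  by apply: (mulfI n4); rewrite mulr0 -(J0 0 0) JE /m /minor2; ring.
have m23 : m 2 3 = 0.
  apply: (mulfI n4); rewrite mulr0 -(_ : J 1 0 + J (-1) 0 - 2 * J 0 0 = 0).
    by rewrite !JE /m /minor2; ring.
  by rewrite !J0 mulr0 addr0 subr0.
have m34 : m 3 4 = 0.
  apply: (mulfI n4); rewrite mulr0 -(_ : J 0 1 + J 0 (-1) - 2 * J 0 0 = 0).
    by rewrite !JE /m /minor2; ring.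
  by rewrite !J0 mulr0 addr0 subr0.
have m24 : m 2 4 = 0.
  apply: (mulfI n4); rewrite mulr0 -(_ : J 1 1 - J 1 0 - J 0 1 + J 0 0 = 0).
    by rewrite !JE /m /minor2; ring.
  by rewrite !J0 !subr0 addr0.
case=> [|[|[|[|[|i]]]]]; case=> [|[|[|[|[|j]]]]] //= _ _ _;
  by rewrite /m ?minor2nn // minor2C -/m ?m01 ?m23 ?m34 ?m24 oppr0.
Qed.

Lemma exists_jacdet_neq0 f g h : in_S12 f -> in_S12 g -> in_S12 h -> lin_indep3 f g h ->
  exists xi, [\/ ev (jacdet f g) xi != 0, ev (jacdet f h) xi != 0 | ev (jacdet g h) xi != 0].
Proof.
move=> Sf Sg Sh indep; apply: contrapT => no_xi.
have [Jfg Jfh Jgh] : [/\ forall xi, ev (jacdet f g) xi = 0,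
    forall xi, ev (jacdet f h) xi = 0 & forall xi, ev (jacdet g h) xi = 0].
  by split=> xi; apply/eqP/negP => ne; apply: no_xi; exists xi;
    [apply: Or31 | apply: Or32 | apply: Or33]; apply/negP.
have := indep3_coef12 Sf Sg Sh indep; apply: minor3_eq0_dependent.
apply: (minor3_eq0_blocks (P := [pred i | i < 2]%N)) => i j lt_i lt_j Pij.
by split; apply: jacdet_eq0_minor2.
Qed.

Lemma sum_sqr3_neq0 (J1 J2 J3 : bipoly R) xi :
  [|| ev J1 xi != 0, ev J2 xi != 0 | ev J3 xi != 0] -> J1 ^+ 2 + J2 ^+ 2 + J3 ^+ 2 != 0.
Proof.
apply: contraTneq => /(congr1 (ev^~ xi)) /eqP.
rewrite /ev !(hornerD, horner_exp, horner0) !paddr_eq0 ?addr_ge0 ?sqr_ge0 // !sqrf_eq0.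
by case/andP=> [/andP[/eqP -> /eqP ->] /eqP ->]; rewrite eqxx.
Qed.

Definition exceptional_poly f g h : bipoly R :=
  var_r * var_s * (jacdet f g ^+ 2 + jacdet f h ^+ 2 + jacdet g h ^+ 2).

Lemma ev_exceptional_poly f g h xi : ev (exceptional_poly f g h) xi =
  xi.1 * xi.2 * (ev (jacdet f g) xi ^+ 2 + ev (jacdet f h) xi ^+ 2 + ev (jacdet g h) xi ^+ 2).
Proof.
by rewrite /ev /exceptional_poly /var_r /var_s !(hornerD, hornerM, horner_exp, hornerC, hornerX).
Qed.

Lemma dim_sum_eq5_exceptional f g h xi :
  ev (exceptional_poly f g h) xi != 0 -> dim_sum xi f g h = 5%N.
Proof.
rewrite ev_exceptional_poly !mulf_eq0 !negb_or => /andP[/andP[a0 b0] jac_ne].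
apply: dim_sum_eq5 => //; apply/or3P; apply: contraNT jac_ne.
rewrite !negb_or => /and3P[/negPn/eqP -> /negPn/eqP -> /negPn/eqP ->].
by rewrite expr0n !addr0.
Qed.

Lemma exceptional_poly_neq0 f g h : in_S12 f -> in_S12 g -> in_S12 h -> lin_indep3 f g h ->
  exceptional_poly f g h != 0.
Proof.
move=> Sf Sg Sh indep; rewrite /exceptional_poly !mulf_neq0 //.
- by rewrite /var_r polyX_eq0.
- by rewrite /var_s polyC_eq0 polyX_eq0.
have [xi /or3P] := exists_jacdet_neq0 Sf Sg Sh indep; exact: sum_sqr3_neq0.
Qed.

Lemma lebesgue_measure_poly_roots (u : {poly R}) : u != 0 ->
  lebesgue_measure [set x | u.[x] = 0] = 0%E.
Proof.
move=> u0; apply/countable_lebesgue_measure0/finite_set_countable.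
apply: (sub_finite_set _ (finite_seq (polyrcf.rootsR u))) => x /= ux0.
by rewrite -(polyrcf.roots_on_rootsR u0) in_itv /=; apply/rootP.
Qed.

Lemma measurable_ev p : measurable_fun setT (ev p).
Proof.
have -> : ev p = fun xi => \sum_(i < size p) (p`_i).[xi.2] * xi.1 ^+ i.
  apply/funext => xi; rewrite /ev (horner_coef p) horner_sum.
  by apply: eq_bigr => i _; rewrite -rmorphXn hornerM hornerC.
apply: measurable_sum => i; apply: measurable_funM.
  by apply: measurableT_comp; [exact: measurable_poly | exact: measurable_snd].
by apply: measurable_funX; exact: measurable_fst.
Qed.

Lemma bipoly_zeros_negligible p : p != 0 ->
  ((@lebesgue_measure R) \x (@lebesgue_measure R))%E.-negligible [set xi | ev p xi = 0].
Proof.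
move=> p0; set L := lead_coef (swapXY p).
have L0 : L != 0 by rewrite lead_coef_eq0 swapXY_eq0.
have mA : measurable [set xi | ev p xi = 0].
  by have := measurable_ev p measurableT (measurable_set1 0); rewrite setTI.
exists [set xi | ev p xi = 0]; split => //.
apply: (product_measure1_xsection_null (m1 := lebesgue_measure) (m2 := lebesgue_measure)
  (N := [set x | L.[x] = 0]) mA).
- by have := measurable_poly L measurableT (measurable_set1 0); rewrite setTI.
- exact: lebesgue_measure_poly_roots.
move=> x Lx0; have -> : xsection [set xi | ev p xi = 0] x = [set y | (p.[x%:P]).[y] = 0].
  by apply/seteqP; split => y; rewrite /xsection /= inE.
apply: lebesgue_measure_poly_roots; apply/eqP => px0; apply: Lx0.
by rewrite /L /= lead_coefE -horner_evalE -coef_map -horner_polyC px0 coef0.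
Qed.

End Bipoly.

Theorem lemma7p4 (R : realType) (f g h : bipoly R) :
  in_S12 f -> in_S12 g -> in_S12 h -> lin_indep3 f g h ->
  {ae ((@lebesgue_measure R) \x (@lebesgue_measure R))%E,
     forall xi : R * R, dim_sum xi f g h = 5%N}.
Proof.
move=> Sf Sg Sh indep.
apply: (negligibleS _ (bipoly_zeros_negligible (exceptional_poly_neq0 Sf Sg Sh indep))).
move=> xi /= dim_neq5; apply/eqP; apply: contra_notT dim_neq5.
exact: dim_sum_eq5_exceptional.
Qed.
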